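(* Let $X$ be a finite set and let $c$ be a choice correspondence on $X$ that admits a minimal compromise representation. Then $c$ satisfies axiom $\gamma$: for all menus $A,B$, if $x\in c(A)\cap c(B)$ then $x\in c(A\cup B)$; and $c$ satisfies No Binary Cycles: for all $x,y,z\in X$, if $x\in c(\{x,y\})$ and $y\in c(\{y,z\})$, then $x\in c(\{x,z\})$.
   Context: A menu is a nonempty subset of $X$. A choice correspondence is a map $c$ assigning to each menu $A$ a nonempty subset $c(A)\subseteq A$. A weak order is a complete and transitive binary relation on $X$; a linear order is an antisymmetric weak order. For a weak order $R$ and menu $A$, $\max(A,R)=\{x\in A: xRy \text{ for all } y\in A\}$. For a linear order $L$, $\min(A,L)$ denotes the unique $x\in A$ with $yLx$ for all $y\in A$. A choice correspondence $c$ admits a minimal compromise representation if there exist a weak order $R$ and a linear order $L$ on $X$ such that for every menu $A$: $c(A)=\max(A,R)$ if $\max(A,R)$ is a singleton, and $c(A)=\max(A,R)\setminus\{\min(\max(A,R),L)\}$ otherwise. *)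

From mathcomp Require Import all_boot.
Set Implicit Arguments. Unset Strict Implicit. Unset Printing Implicit Defensive.

Section Choice.
Variable X : finType.

Definition menu (A : {set X}) : Prop := A != set0.

Definition choice_corr (c : {set X} -> {set X}) : Prop :=
  forall A, menu A -> c A \subset A /\ c A != set0.

Definition complete (R : rel X) : Prop := forall x y, R x y || R y x.
Definition weak_order (R : rel X) : Prop := complete R /\ transitive R.
Definition linear_order (L : rel X) : Prop :=
  weak_order L /\ antisymmetric L.

Definition maxR (R : rel X) (A : {set X}) : {set X} :=
  [set x in A | [forall y in A, R x y]].

Definition is_minL (L : rel X) (M : {set X}) (z : X) : Prop :=
  z \in M /\ forall y, y \in M -> L y z.

Definition minimal_compromise (c : {set X} -> {set X}) : Prop :=
  exists (R L : rel X), weak_order R /\ linear_order L /\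
    forall A, menu A ->
      (#|maxR R A| = 1 -> c A = maxR R A) /\
      (#|maxR R A| <> 1 ->
         forall z, is_minL L (maxR R A) z -> c A = maxR R A :\ z).

Definition axiom_gamma (c : {set X} -> {set X}) : Prop :=
  forall A B x, menu A -> menu B ->
    x \in c A -> x \in c B -> x \in c (A :|: B).

Definition no_binary_cycles (c : {set X} -> {set X}) : Prop :=
  forall x y z : X, x \in c [set x; y] -> y \in c [set y; z] ->
    x \in c [set x; z].
End Choice.

From mathcomp Require Import all_boot.

Set Implicit Arguments.
Unset Strict Implicit.
Unset Printing Implicit Defensive.

(* Under a minimal compromise representation, x is chosen from A exactly when
   x is R-maximal in A and either no other element of A is R-maximal or some
   other R-maximal element lies L-above x.  Axiom gamma follows because when x
   is R-maximal in both A and B, the R-maximal elements of A :|: B are those of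
   A together with those of B.  For binary cycles, transitivity of R gives
   R x z; if also R z x then x, y, z are all R-indifferent, each binary choice
   drops the L-smaller element, and L x y, L y z yield L x z. *)

Lemma ex_minimum (X : finType) (e : rel X) (S : {set X}) :
  total e -> transitive e -> S != set0 ->
  exists2 z, z \in S & forall y, y \in S -> e z y.
Proof.
move=> e_total e_trans /set0Pn[x xS].
have : x \in sort e (enum S) by rewrite mem_sort mem_enum.
have sortedS := sort_sorted e_total (enum S).
have memS y : (y \in sort e (enum S)) = (y \in S) by rewrite mem_sort mem_enum.
case: (sort e (enum S)) sortedS memS => [//|z t] /= /(order_path_min e_trans)/allP le_z memS _.
exists z => [|y]; first by rewrite -memS mem_head.
rewrite -memS in_cons => /predU1P[->|/le_z //].
by have := e_total z z; rewrite orbb.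
Qed.

Section MaxR.
Variables (X : finType) (R : rel X).
Hypothesis R_trans : transitive R.

Lemma maxR_neq0 (A : {set X}) : total R -> A != set0 -> maxR R A != set0.
Proof.
move=> R_total /(ex_minimum R_total R_trans)[z zA top_z].
by apply/set0Pn; exists z; rewrite inE zA; apply/forall_inP.
Qed.

Lemma maxR_setU (A B : {set X}) x :
  x \in maxR R A -> x \in maxR R B -> maxR R (A :|: B) = maxR R A :|: maxR R B.
Proof.
rewrite !inE => /andP[xA /forall_inP topA] /andP[xB /forall_inP topB].
apply/setP => y; rewrite !inE.
apply/andP/orP => [[/orP[yA|yB] /forall_inP topy]|].
- by left; rewrite yA; apply/forall_inP => w wA; apply: topy; rewrite inE wA.
- by right; rewrite yB; apply/forall_inP => w wB; apply: topy; rewrite inE wB orbT.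
- case=> /andP[yC /forall_inP topy]; split; rewrite ?yC ?orbT //; apply/forall_inP => w;
    rewrite inE => /orP[wA|wB]; eauto.
Qed.

End MaxR.

Section MinimalCompromise.
Variables (X : finType) (c : {set X} -> {set X}) (R L : rel X).
Hypotheses (R_weak : weak_order R) (L_linear : linear_order L).
Hypothesis c_repr : forall A, menu A ->
  (#|maxR R A| = 1 -> c A = maxR R A) /\
  (#|maxR R A| <> 1 -> forall z, is_minL L (maxR R A) z -> c A = maxR R A :\ z).

Lemma ex_minL (M : {set X}) : M != set0 -> exists z, is_minL L M z.
Proof.
have [[L_total L_trans] _] := L_linear.
have L'_total : total (fun x y => L y x) by move=> x y; rewrite orbC.
have L'_trans : transitive (fun x y => L y x) by move=> y x z ? ?; apply: L_trans; eauto.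
by case/(ex_minimum L'_total L'_trans) => z; exists z.
Qed.

Lemma minL_neq (M : {set X}) z x : is_minL L M z -> x \in M ->
  (x != z) <-> exists2 w, w \in M :\ x & L x w.
Proof.
have [_ L_anti] := L_linear; case=> zM min_z xM; split => [xz|[w]].
  by exists z; rewrite ?min_z // in_setD1 eq_sym xz.
rewrite in_setD1 => /andP[wx wM] Lxw; apply: contraNneq wx => xz.
by apply/eqP/L_anti; rewrite Lxw andbT xz min_z.
Qed.

Lemma mem_choice A x : menu A -> x \in c A <->
  x \in maxR R A /\ (maxR R A :\ x = set0 \/ exists2 w, w \in maxR R A :\ x & L x w).
Proof.
move=> mA; have [c_single c_compromise] := c_repr mA.
have [R_total R_trans] := R_weak.
case: (boolP (#|maxR R A| == 1)) => [M1 | /eqP M_not1].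
  have /cards1P[a Ma] := M1; rewrite c_single ?(eqP M1) // Ma inE.
  by split=> [/eqP-> | [] //]; split; [rewrite eqxx | left; apply: setDv].
have [z zmin] := ex_minL (maxR_neq0 R_trans R_total mA).
rewrite (c_compromise M_not1 z zmin) in_setD1.
split=> [/andP[xz xM] | [xM [Mx | xw]]].
- by split=> //; right; apply/(minL_neq zmin xM).
- by case: M_not1; rewrite (cardsD1 x) xM Mx cards0.
- by rewrite xM andbT; apply/(minL_neq zmin xM).
Qed.

Lemma mem_maxR2 x y z :
  (z \in maxR R [set x; y]) = [&& z \in [set x; y], R z x & R z y].
Proof.
rewrite inE; congr (_ && _); apply/forall_inP/andP => [top_z | [Rzx Rzy] w].
  by split; apply: top_z; rewrite !inE eqxx ?orbT.
by rewrite !inE => /orP[] /eqP->.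
Qed.

Lemma mem_choice2 x y :
  x \in c [set x; y] <-> R x y /\ (x != y -> R y x -> L x y).
Proof.
have [R_total _] := R_weak.
have R_refl w : R w w by have := R_total w w; rewrite orbb.
have m2 : menu [set x; y] by apply/set0Pn; exists x; rewrite !inE eqxx.
have yM : R y x -> y \in maxR R [set x; y].
  by move=> Ryx; rewrite mem_maxR2 !inE eqxx Ryx R_refl orbT.
apply: iff_trans (mem_choice x m2) _; rewrite mem_maxR2 !inE eqxx R_refl /=.
split=> [[Rxy Mx] | [Rxy Lxy]]; split=> //.
  move=> xy /yM y_max; case: Mx => [/setP/(_ y) | [w]].
    by rewrite in_setD1 eq_sym xy y_max inE.
  by rewrite in_setD1 mem_maxR2 !inE => /andP[/negPf-> /andP[/eqP<-]].
case: (boolP ((x != y) && R y x)) => [/andP[xy Ryx] | yNmax].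
  by right; exists y; [rewrite in_setD1 eq_sym xy yM | exact: Lxy].
left; apply/setP => w; rewrite in_setD1 mem_maxR2 !inE.
have [-> | wx] //= := eqVneq w x; have [wy | //] /= := eqVneq w y.
by apply: contraNF yNmax; rewrite -wy eq_sym wx => /andP[].
Qed.

Lemma choice_gamma : axiom_gamma c.
Proof.
have [_ R_trans] := R_weak.
move=> A B x mA mB /(mem_choice x mA)[xA hA] /(mem_choice x mB)[xB hB].
have mAB : menu (A :|: B) by rewrite /menu setU_eq0 negb_and mA.
apply/(mem_choice x mAB); rewrite (maxR_setU R_trans xA xB) setDUl in_setU xA.
split=> //; case: hA => [A0 | [w wA Lxw]]; last by right; exists w; rewrite // in_setU wA.
case: hB => [B0 | [w wB Lxw]]; last by right; exists w; rewrite // in_setU wB orbT.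
by left; rewrite A0 B0 setU0.
Qed.

Lemma choice_no_binary_cycles : no_binary_cycles c.
Proof.
have [_ R_trans] := R_weak; have [[_ L_trans] _] := L_linear.
move=> x y z /mem_choice2[Rxy Lxy] /mem_choice2[Ryz Lyz].
apply/mem_choice2; split=> [|xz Rzx]; first exact: R_trans Rxy Ryz.
have [exy | xy] := eqVneq x y; first by subst x; exact: Lyz xz Rzx.
have [eyz | yz] := eqVneq y z; first by subst z; exact: Lxy xz Rzx.
have Ryx := R_trans _ _ _ Ryz Rzx; have Rzy := R_trans _ _ _ Rzx Rxy.
exact: L_trans (Lxy xy Ryx) (Lyz yz Rzy).
Qed.

End MinimalCompromise.

Theorem lemma2 (X : finType) (c : {set X} -> {set X}) :
  choice_corr c -> minimal_compromise c ->
  axiom_gamma c /\ no_binary_cycles c.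
Proof.
move=> _ [R [L [R_weak [L_linear c_repr]]]].
by split; [apply: choice_gamma c_repr | apply: choice_no_binary_cycles c_repr].
Qed.
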